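(* Let $\mathcal C,\mathcal C'$ be categories with finite colimits, equipped with costable factorisation systems $(\mathcal E,\mathcal M)$ and $(\mathcal E',\mathcal M')$ respectively. Let $A\colon\mathcal C\to\mathcal C'$ be a functor preserving finite colimits such that $A(\mathcal M)\subseteq\mathcal M'$. Then there is a hypergraph functor $\square\colon\mathrm{Corel}_{(\mathcal E,\mathcal M)}(\mathcal C)\to\mathrm{Corel}_{(\mathcal E',\mathcal M')}(\mathcal C')$ sending each object $X$ to $AX$ and each corelation $X\xrightarrow{i}N\xleftarrow{o}Y$ to the $\mathcal E'$-part $AX\xrightarrow{e'\iota_{AX}}\overline{AN}\xleftarrow{e'\iota_{AY}}AY$ of the image cospan $AX\xrightarrow{Ai}AN\xleftarrow{Ao}AY$, with coherence maps $\overline{\kappa_{X,Y}}$, the $\mathcal E'$-parts of the cospans $AX+AY\xrightarrow{\kappa_{X,Y}}A(X+Y)\xleftarrow{1}A(X+Y)$, where $\kappa_{X,Y}\colon AX+AY\to A(X+Y)$ are the canonical isomorphisms given since $A$ preserves colimits.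
   Context: A factorisation system $(\mathcal E,\mathcal M)$ on a category $\mathcal C$ consists of subcategories $\mathcal E,\mathcal M$ containing all isomorphisms such that every morphism factors as $m\circ e$ with $e\in\mathcal E,m\in\mathcal M$, with the unique diagonal fill-in property for commuting squares between such factorisations. It is costable if $\mathcal M$ is stable under pushout. An $(\mathcal E,\mathcal M)$-corelation $X\to Y$ is a cospan $X\xrightarrow{i}N\xleftarrow{o}Y$ with $[i,o]\colon X+Y\to N$ in $\mathcal E$ (taken up to isomorphism of cospans). The $\mathcal E$-part of a cospan $X\xrightarrow{i}N\xleftarrow{o}Y$: factor $[i,o]=m\circ e$, $e\colon X+Y\to\overline N\in\mathcal E$, $m\in\mathcal M$, and take $X\xrightarrow{e\iota_X}\overline N\xleftarrow{e\iota_Y}Y$. $\mathrm{Corel}_{(\mathcal E,\mathcal M)}(\mathcal C)$ is the hypergraph category with objects those of $\mathcal C$, morphisms corelations, composition the $\mathcal E$-part of the pushout composite, monoidal product $+$, and coherence and Frobenius maps the $\mathcal E$-parts of those of $\mathrm{Cospan}(\mathcal C)$ (whose Frobenius maps are the cospans $\mu=[1,1]\colon X+X\to X$, $\eta=!\colon\varnothing\to X$ and their opposites $\delta,\epsilon$). A hypergraph category is a symmetric monoidal category in which every object carries a special commutative Frobenius monoid structure, compatible with the monoidal product in the standard way. A hypergraph functor is a strong symmetric monoidal functor $(F,\varphi)$ such that for each $X$ the Frobenius structure on $FX$ is $(F\mu_X\circ\varphi_{X,X},\ \varphi^{-1}\circ F\delta_X,\ F\eta_X\circ\varphi_1,\ \varphi_1^{-1}\circ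 F\epsilon_X)$. *)

Record Cat := {
  ob : Type;
  hom : ob -> ob -> Type;
  idc : forall X, hom X X;
  comp : forall X Y Z, hom Y Z -> hom X Y -> hom X Z;
  comp_id_l : forall X Y (f : hom X Y), comp X Y Y (idc Y) f = f;
  comp_id_r : forall X Y (f : hom X Y), comp X X Y f (idc X) = f;
  comp_assoc : forall W X Y Z (f : hom W X) (g : hom X Y) (h : hom Y Z),
      comp W Y Z h (comp W X Y g f) = comp W X Z (comp X Y Z h g) f
}.
Arguments hom {c} X Y.
Arguments idc {c} X.
Arguments comp {c X Y Z} g f.

Definition is_iso {C : Cat} {X Y : ob C} (f : hom X Y) : Prop :=
  exists g : hom Y X, comp g f = idc X /\ comp f g = idc Y.

(* Chosen finite colimits: initial object, binary coproducts, pushouts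
   (these generate all finite colimits). *)
Record FinColim (C : Cat) := {
  init : ob C;
  bang : forall X : ob C, hom init X;
  bang_uniq : forall X (f : hom init X), f = bang X;
  cop : ob C -> ob C -> ob C;
  inl : forall X Y, hom X (cop X Y);
  inr : forall X Y, hom Y (cop X Y);
  copair : forall X Y Z, hom X Z -> hom Y Z -> hom (cop X Y) Z;
  copair_inl : forall X Y Z (f : hom X Z) (g : hom Y Z),
      comp (copair X Y Z f g) (inl X Y) = f;
  copair_inr : forall X Y Z (f : hom X Z) (g : hom Y Z),
      comp (copair X Y Z f g) (inr X Y) = g;
  copair_uniq : forall X Y Z (h : hom (cop X Y) Z),
      h = copair X Y Z (comp h (inl X Y)) (comp h (inr X Y));
  po : forall X Y Z, hom X Y -> hom X Z -> ob C;
  po1 : forall X Y Z (f : hom X Y) (g : hom X Z), hom Y (po X Y Z f g);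
  po2 : forall X Y Z (f : hom X Y) (g : hom X Z), hom Z (po X Y Z f g);
  po_comm : forall X Y Z (f : hom X Y) (g : hom X Z),
      comp (po1 X Y Z f g) f = comp (po2 X Y Z f g) g;
  po_univ : forall X Y Z (f : hom X Y) (g : hom X Z) W (h : hom Y W) (k : hom Z W),
      comp h f = comp k g ->
      exists u : hom (po X Y Z f g) W,
        comp u (po1 X Y Z f g) = h /\ comp u (po2 X Y Z f g) = k /\
        forall u' : hom (po X Y Z f g) W,
          comp u' (po1 X Y Z f g) = h -> comp u' (po2 X Y Z f g) = k -> u' = u
}.
Arguments init {C} _.
Arguments bang {C} _ X.
Arguments cop {C} _ X Y.
Arguments inl {C} _ X Y.
Arguments inr {C} _ X Y.
Arguments copair {C} _ {X Y Z} f g.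
Arguments po {C} _ {X Y Z} f g.
Arguments po1 {C} _ {X Y Z} f g.
Arguments po2 {C} _ {X Y Z} f g.

Record FactSys (C : Cat) := {
  E : forall X Y : ob C, hom X Y -> Prop;
  M : forall X Y : ob C, hom X Y -> Prop;
  E_iso : forall X Y (f : hom X Y), is_iso f -> E X Y f;
  M_iso : forall X Y (f : hom X Y), is_iso f -> M X Y f;
  E_comp : forall X Y Z (f : hom X Y) (g : hom Y Z), E X Y f -> E Y Z g -> E X Z (comp g f);
  M_comp : forall X Y Z (f : hom X Y) (g : hom Y Z), M X Y f -> M Y Z g -> M X Z (comp g f);
  factor : forall X Y (f : hom X Y),
      { Z : ob C & { e : hom X Z & { m : hom Z Y | E X Z e /\ M Z Y m /\ comp m e = f } } };
  diag : forall A B Cc D (e : hom A B) (m : hom Cc D) (u : hom A Cc) (v : hom B D),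
      E A B e -> M Cc D m -> comp m u = comp v e ->
      exists d : hom B Cc, comp d e = u /\ comp m d = v /\
        forall d' : hom B Cc, comp d' e = u -> comp m d' = v -> d' = d
}.
Arguments E {C} _ {X Y} f.
Arguments M {C} _ {X Y} f.
Arguments factor {C} _ {X Y} f.

(* Costable: M is stable under pushout (checked on the chosen pushouts,
   which determine all pushouts up to iso). *)
Definition costable {C : Cat} (L : FinColim C) (F : FactSys C) : Prop :=
  forall X Y Z (f : hom X Y) (g : hom X Z),
    (M F f -> M F (po2 L f g)) /\ (M F g -> M F (po1 L f g)).

Record Functor (C D : Cat) := {
  fob : ob C -> ob D;
  fmap : forall X Y, hom X Y -> hom (fob X) (fob Y);
  fmap_id : forall X, fmap X X (idc X) = idc (fob X);
  fmap_comp : forall X Y Z (f : hom X Y) (g : hom Y Z),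
      fmap X Z (comp g f) = comp (fmap Y Z g) (fmap X Y f)
}.
Arguments fob {C D} _ X.
Arguments fmap {C D} _ {X Y} f.

Definition preserves_finite_colimits {C D : Cat} (L : FinColim C) (A : Functor C D) : Prop :=
  (forall W : ob D, exists u : hom (fob A (init L)) W,
      forall u' : hom (fob A (init L)) W, u' = u) /\
  (forall X Y (W : ob D) (h : hom (fob A X) W) (k : hom (fob A Y) W),
      exists u : hom (fob A (cop L X Y)) W,
        comp u (fmap A (inl L X Y)) = h /\ comp u (fmap A (inr L X Y)) = k /\
        forall u', comp u' (fmap A (inl L X Y)) = h ->
                   comp u' (fmap A (inr L X Y)) = k -> u' = u) /\
  (forall X Y Z (f : hom X Y) (g : hom X Z) (W : ob D)
          (h : hom (fob A Y) W) (k : hom (fob A Z) W),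
      comp h (fmap A f) = comp k (fmap A g) ->
      exists u : hom (fob A (po L f g)) W,
        comp u (fmap A (po1 L f g)) = h /\ comp u (fmap A (po2 L f g)) = k /\
        forall u', comp u' (fmap A (po1 L f g)) = h ->
                   comp u' (fmap A (po2 L f g)) = k -> u' = u).

Record HGData := {
  hob : Type;
  hhom : hob -> hob -> Type;
  heq : forall X Y, hhom X Y -> hhom X Y -> Prop;
  hid : forall X, hhom X X;
  hcomp : forall X Y Z, hhom Y Z -> hhom X Y -> hhom X Z;
  hten : hob -> hob -> hob;
  htenh : forall X Y X' Y', hhom X Y -> hhom X' Y' -> hhom (hten X X') (hten Y Y');
  hunit : hob;
  hassoc : forall X Y Z, hhom (hten (hten X Y) Z) (hten X (hten Y Z));
  hlunit : forall X, hhom (hten hunit X) X;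
  hrunit : forall X, hhom (hten X hunit) X;
  hbraid : forall X Y, hhom (hten X Y) (hten Y X);
  hmu : forall X, hhom (hten X X) X;
  heta : forall X, hhom hunit X;
  hdelta : forall X, hhom X (hten X X);
  heps : forall X, hhom X hunit
}.
Arguments hhom {h} X Y.
Arguments heq {h X Y} f g.
Arguments hid {h} X.
Arguments hcomp {h X Y Z} g f.
Arguments hten {h} X Y.
Arguments htenh {h X Y X' Y'} f g.
Arguments hunit {h}.
Arguments hassoc {h} X Y Z.
Arguments hlunit {h} X.
Arguments hrunit {h} X.
Arguments hbraid {h} X Y.
Arguments hmu {h} X.
Arguments heta {h} X.
Arguments hdelta {h} X.
Arguments heps {h} X.

Record IsHypergraphFunctor (D D' : HGData) (F0 : hob D -> hob D')
  (F1 : forall X Y, @hhom D X Y -> @hhom D' (F0 X) (F0 Y))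
  (phi : forall X Y, @hhom D' (hten (F0 X) (F0 Y)) (F0 (hten X Y)))
  (phi1 : @hhom D' hunit (F0 hunit)) : Prop := {
  hf_resp : forall X Y (f g : @hhom D X Y), heq f g -> heq (F1 X Y f) (F1 X Y g);
  hf_id : forall X, heq (F1 X X (hid X)) (hid (F0 X));
  hf_comp : forall X Y Z (f : @hhom D X Y) (g : @hhom D Y Z),
      heq (F1 X Z (hcomp g f)) (hcomp (F1 Y Z g) (F1 X Y f));
  hf_phi_nat : forall X Y X' Y' (f : @hhom D X X') (g : @hhom D Y Y'),
      heq (hcomp (F1 _ _ (htenh f g)) (phi X Y))
          (hcomp (phi X' Y') (htenh (F1 X X' f) (F1 Y Y' g)));
  hf_phi_iso : forall X Y, exists psi : @hhom D' (F0 (hten X Y)) (hten (F0 X) (F0 Y)),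
      heq (hcomp psi (phi X Y)) (hid _) /\ heq (hcomp (phi X Y) psi) (hid _);
  hf_phi1_iso : exists psi : @hhom D' (F0 hunit) hunit,
      heq (hcomp psi phi1) (hid _) /\ heq (hcomp phi1 psi) (hid _);
  hf_assoc : forall X Y Z,
      heq (hcomp (F1 _ _ (hassoc X Y Z))
                 (hcomp (phi (hten X Y) Z) (htenh (phi X Y) (hid (F0 Z)))))
          (hcomp (phi X (hten Y Z))
                 (hcomp (htenh (hid (F0 X)) (phi Y Z)) (hassoc (F0 X) (F0 Y) (F0 Z))));
  hf_lunit : forall X,
      heq (hcomp (F1 _ _ (hlunit X)) (hcomp (phi hunit X) (htenh phi1 (hid (F0 X)))))
          (hlunit (F0 X));
  hf_runit : forall X,
      heq (hcomp (F1 _ _ (hrunit X)) (hcomp (phi X hunit) (htenh (hid (F0 X)) phi1)))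
          (hrunit (F0 X));
  hf_braid : forall X Y,
      heq (hcomp (F1 _ _ (hbraid X Y)) (phi X Y))
          (hcomp (phi Y X) (hbraid (F0 X) (F0 Y)));
  (* Frobenius structure on FX is (F mu o phi, phi^-1 o F delta, F eta o phi1,
     phi1^-1 o F eps); the last two are written as F delta = phi o delta,
     F eps = phi1 o eps. *)
  hf_mu : forall X, heq (hcomp (F1 _ _ (hmu X)) (phi X X)) (hmu (F0 X));
  hf_delta : forall X, heq (F1 _ _ (hdelta X)) (hcomp (phi X X) (hdelta (F0 X)));
  hf_eta : forall X, heq (hcomp (F1 _ _ (heta X)) phi1) (heta (F0 X));
  hf_eps : forall X, heq (F1 _ _ (heps X)) (hcomp phi1 (heps (F0 X)))
}.

Section Corel.
Variables (C : Cat) (L : FinColim C) (F : FactSys C).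

(* A cospan X -i-> N <-o- Y is encoded by the copairing [i,o] : X+Y -> N.
   A corelation is such a cospan with [i,o] in E. *)
Definition corel (X Y : ob C) : Type :=
  { N : ob C & { f : hom (cop L X Y) N | E F f } }.

Definition corel_eq (X Y : ob C) (c d : corel X Y) : Prop :=
  exists h : hom (projT1 c) (projT1 d),
    is_iso h /\ comp h (proj1_sig (projT2 c)) = proj1_sig (projT2 d).

Definition epart {X Y N : ob C} (f : hom (cop L X Y) N) : corel X Y :=
  match factor F f with
  | existT _ Z (existT _ e (exist _ m H)) => existT _ Z (exist _ e (proj1 H))
  end.

Definition lleg {X Y N} (f : hom (cop L X Y) N) : hom X N := comp f (inl L X Y).
Definition rleg {X Y N} (f : hom (cop L X Y) N) : hom Y N := comp f (inr L X Y).
Definition cmap {X Y} (c : corel X Y) : hom (cop L X Y) (projT1 c) := proj1_sig (projT2 c).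

Definition corel_comp (X Y Z : ob C) (d : corel Y Z) (c : corel X Y) : corel X Z :=
  let f := cmap c in let g := cmap d in
  epart (copair L (comp (po1 L (rleg f) (lleg g)) (lleg f))
                  (comp (po2 L (rleg f) (lleg g)) (rleg g))).

Definition corel_of {X Y : ob C} (a : hom X Y) : corel X Y :=
  epart (copair L a (idc Y)).

Definition corel_id (X : ob C) : corel X X := corel_of (idc X).

Definition hsum {X X' Y Y'} (h : hom X Y) (k : hom X' Y') :
  hom (cop L X X') (cop L Y Y') :=
  copair L (comp (inl L Y Y') h) (comp (inr L Y Y') k).

Definition corel_ten (X Y X' Y' : ob C) (c : corel X Y) (d : corel X' Y') :
  corel (cop L X X') (cop L Y Y') :=
  let f := cmap c in let g := cmap d in
  epart (copair L (hsum (lleg f) (lleg g)) (hsum (rleg f) (rleg g))).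

Definition assoc_map (X Y Z : ob C) : hom (cop L (cop L X Y) Z) (cop L X (cop L Y Z)) :=
  copair L (copair L (inl L X (cop L Y Z)) (comp (inr L X (cop L Y Z)) (inl L Y Z)))
           (comp (inr L X (cop L Y Z)) (inr L Y Z)).
Definition lunit_map (X : ob C) : hom (cop L (init L) X) X := copair L (bang L X) (idc X).
Definition runit_map (X : ob C) : hom (cop L X (init L)) X := copair L (idc X) (bang L X).
Definition braid_map (X Y : ob C) : hom (cop L X Y) (cop L Y X) :=
  copair L (inr L Y X) (inl L Y X).
Definition codiag (X : ob C) : hom (cop L X X) X := copair L (idc X) (idc X).

(* Frobenius maps of Cospan(C): mu = [1,1] : X+X -> X, eta = ! : 0 -> X
   (as cospans X+X -> X <-1- X and 0 -> X <-1- X) and their opposites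
   delta : X -1-> X <-[1,1]- X+X, eps : X -1-> X <-!- 0; then E-parts. *)
Definition corel_mu (X : ob C) : corel (cop L X X) X := corel_of (codiag X).
Definition corel_eta (X : ob C) : corel (init L) X := corel_of (bang L X).
Definition corel_delta (X : ob C) : corel X (cop L X X) :=
  epart (copair L (idc X) (codiag X)).
Definition corel_eps (X : ob C) : corel X (init L) :=
  epart (copair L (idc X) (bang L X)).

Definition Corel : HGData := {|
  hob := ob C;
  hhom := corel;
  heq := corel_eq;
  hid := corel_id;
  hcomp := corel_comp;
  hten := cop L;
  htenh := corel_ten;
  hunit := init L;
  hassoc := fun X Y Z => corel_of (assoc_map X Y Z);
  hlunit := fun X => corel_of (lunit_map X);
  hrunit := fun X => corel_of (runit_map X);
  hbraid := fun X Y => corel_of (braid_map X Y);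
  hmu := corel_mu;
  heta := corel_eta;
  hdelta := corel_delta;
  heps := corel_eps
|}.

End Corel.

Arguments corel {C} L F X Y.
Arguments corel_eq {C} L F {X Y} c d.
Arguments epart {C} L F {X Y N} f.
Arguments lleg {C} L {X Y N} f.
Arguments rleg {C} L {X Y N} f.
Arguments cmap {C} L F {X Y} c.
Arguments corel_of {C} L F {X Y} a.
Arguments Corel {C} L F.

Section Image.
Variables (C C' : Cat) (L : FinColim C) (L' : FinColim C') (F : FactSys C) (F' : FactSys C')
          (A : Functor C C').

Definition corel_image (X Y : ob C) (c : corel L F X Y) :
  corel L' F' (fob A X) (fob A Y) := ltac:(exact (
  epart L' F' (copair L' (fmap A (lleg L (cmap L F c))) (fmap A (rleg L (cmap L F c)))))).

Definition kappa (X Y : ob C) : hom (cop L' (fob A X) (fob A Y)) (fob A (cop L X Y)) :=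
  copair L' (fmap A (inl L X Y)) (fmap A (inr L X Y)).

Definition kappa_bar (X Y : ob C) :
  corel L' F' (cop L' (fob A X) (fob A Y)) (fob A (cop L X Y)) :=
  corel_of L' F' (kappa X Y).

Definition unit_bar : corel L' F' (init L') (fob A (init L)) :=
  corel_of L' F' (bang L' (fob A (init L))).

End Image.


(* Say that a corelation [c] is an E-part of a cospan [f] when [f] is [c] followed by an
   M-map.  E-parts are unique up to isomorphism, and costability makes them compatible
   with composition and monoidal product: the comparison map from the pushout of two
   cospans to the pushout of their images under M-maps lies in M.  Since [A] preserves
   finite colimits and maps M into M', the image of an E-part of [f] is an E-part of
   [A f] precomposed with [kappa].  Each functor axiom then follows by exhibiting one
   cospan of which both sides are E-parts. *)

Section Category.
Variable C : Cat.

Lemma comp_assoc_r {W X Y Z : ob C} (f : hom W X) (g : hom X Y) (h : hom Y Z) :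
  comp (comp h g) f = comp h (comp g f).
Proof. symmetry; apply comp_assoc. Qed.

Lemma comp_eq_assoc {W X Y Z : ob C} (a : hom Y Z) (b : hom X Y) (c : hom X Z) (x : hom W X) :
  comp a b = c -> comp a (comp b x) = comp c x.
Proof. intros H; rewrite comp_assoc, H; reflexivity. Qed.

Lemma iso_id (X : ob C) : is_iso (idc X).
Proof. exists (idc X); split; apply comp_id_l. Qed.

Lemma comp_cancel_iso_r {X Y Z : ob C} (x : hom Y Z) (k : hom X Y) (p : hom Y X) (y : hom X Z) :
  comp x k = y -> comp k p = idc Y -> x = comp y p.
Proof. intros H1 H2. rewrite <- H1, comp_assoc_r, H2, comp_id_r; reflexivity. Qed.

End Category.

Section Colimits.
Variables (C : Cat) (L : FinColim C).

Lemma copair_inl_assoc {X Y Z W : ob C} (f : hom X Z) (g : hom Y Z) (x : hom W X) :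
  comp (copair L f g) (comp (inl L X Y) x) = comp f x.
Proof. apply comp_eq_assoc, copair_inl. Qed.

Lemma copair_inr_assoc {X Y Z W : ob C} (f : hom X Z) (g : hom Y Z) (x : hom W Y) :
  comp (copair L f g) (comp (inr L X Y) x) = comp g x.
Proof. apply comp_eq_assoc, copair_inr. Qed.

Lemma copair_ext {X Y Z : ob C} (h k : hom (cop L X Y) Z) :
  comp h (inl L X Y) = comp k (inl L X Y) -> comp h (inr L X Y) = comp k (inr L X Y) -> h = k.
Proof.
  intros H1 H2. rewrite (copair_uniq C L X Y Z h), (copair_uniq C L X Y Z k), H1, H2.
  reflexivity.
Qed.

Lemma init_hom_eq {X : ob C} (f g : hom (init L) X) : f = g.
Proof. rewrite (bang_uniq C L X f), (bang_uniq C L X g); reflexivity. Qed.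

Definition is_pushout {X Y Z W : ob C} (f : hom X Y) (g : hom X Z)
  (p1 : hom Y W) (p2 : hom Z W) : Prop :=
  comp p1 f = comp p2 g /\
  forall V (h : hom Y V) (k : hom Z V), comp h f = comp k g ->
    exists u : hom W V, comp u p1 = h /\ comp u p2 = k /\
      forall u', comp u' p1 = h -> comp u' p2 = k -> u' = u.

Lemma po_is_pushout {X Y Z : ob C} (f : hom X Y) (g : hom X Z) :
  is_pushout f g (po1 L f g) (po2 L f g).
Proof. split; [apply po_comm | intros; apply po_univ; assumption]. Qed.

Lemma is_pushout_sym {X Y Z W : ob C} (f : hom X Y) (g : hom X Z)
  (p1 : hom Y W) (p2 : hom Z W) :
  is_pushout f g p1 p2 -> is_pushout g f p2 p1.
Proof.
  intros [Hc Hu]. split; [symmetry; assumption|]. intros V h k Hhk.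
  destruct (Hu V k h (eq_sym Hhk)) as [u [H1 [H2 H3]]].
  exists u; split; [|split]; auto.
Qed.

Lemma is_pushout_ext {X Y Z W V : ob C} (f : hom X Y) (g : hom X Z)
  (p1 : hom Y W) (p2 : hom Z W) (u v : hom W V) :
  is_pushout f g p1 p2 -> comp u p1 = comp v p1 -> comp u p2 = comp v p2 -> u = v.
Proof.
  intros [Hc Hu] H1 H2.
  destruct (Hu V (comp u p1) (comp u p2)) as [w [_ [_ Hw]]].
  { rewrite !comp_assoc_r, Hc; reflexivity. }
  rewrite (Hw u), (Hw v); auto.
Qed.

Lemma coproduct_is_pushout (X Y : ob C) :
  is_pushout (bang L X) (bang L Y) (inl L X Y) (inr L X Y).
Proof.
  split; [apply init_hom_eq|]. intros V h k _. exists (copair L h k).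
  split; [apply copair_inl | split; [apply copair_inr|]].
  intros u' H1 H2. apply copair_ext; rewrite ?copair_inl, ?copair_inr; assumption.
Qed.

Lemma is_pushout_along_iso {X Y Z : ob C} (a : hom X Y) (j : hom X Z) (j' : hom Z X) :
  comp j' j = idc X -> comp j j' = idc Z -> is_pushout a j (idc Y) (comp a j').
Proof.
  intros H1 H2. split; [rewrite comp_id_l, comp_assoc_r, H1, comp_id_r; reflexivity|].
  intros V h k Hhk. exists h. split; [apply comp_id_r|split].
  - rewrite <- comp_assoc_r, Hhk, comp_assoc_r, H2, comp_id_r; reflexivity.
  - intros u' Hu _. rewrite <- Hu, comp_id_r; reflexivity.
Qed.

Definition cospan_ten {X Y X' Y' N N' : ob C} (f : hom (cop L X Y) N)
  (g : hom (cop L X' Y') N') : hom (cop L (cop L X X') (cop L Y Y')) (cop L N N') :=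
  copair L (hsum C L (lleg L f) (lleg L g)) (hsum C L (rleg L f) (rleg L g)).

End Colimits.

Section EParts.
Variables (C : Cat) (L : FinColim C) (F : FactSys C).

Definition is_epart {X Y N : ob C} (c : corel L F X Y) (f : hom (cop L X Y) N) : Prop :=
  exists m, M F m /\ comp m (cmap L F c) = f.

Lemma is_epart_epart {X Y N : ob C} (f : hom (cop L X Y) N) : is_epart (epart L F f) f.
Proof.
  unfold is_epart, epart. destruct (factor F f) as [Z [e [m [He [Hm Hf]]]]].
  exists m; auto.
Qed.

Lemma is_epart_of {X Y : ob C} (a : hom X Y) : is_epart (corel_of L F a) (copair L a (idc Y)).
Proof. apply is_epart_epart. Qed.

Lemma is_epart_cmap {X Y : ob C} (c : corel L F X Y) : is_epart c (cmap L F c).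
Proof. exists (idc _); split; [apply M_iso, iso_id | apply comp_id_l]. Qed.

Lemma is_epart_eq {X Y N : ob C} (c : corel L F X Y) (f g : hom (cop L X Y) N) :
  is_epart c f -> f = g -> is_epart c g.
Proof. intros H <-; assumption. Qed.

Lemma is_epart_M {X Y N N' : ob C} (c : corel L F X Y) (f : hom (cop L X Y) N)
  (m : hom N N') :
  is_epart c f -> M F m -> is_epart c (comp m f).
Proof.
  intros [m1 [Hm1 Hf]] Hm. exists (comp m m1). split; [apply M_comp; assumption|].
  rewrite comp_assoc_r, Hf; reflexivity.
Qed.

Lemma is_epart_iso {X Y N N' : ob C} (c : corel L F X Y) (f : hom (cop L X Y) N)
  (m : hom N N') :
  is_epart c f -> is_iso m -> is_epart c (comp m f).
Proof. intros; apply is_epart_M, M_iso; assumption. Qed.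

Lemma is_epart_corel_eq {X Y N : ob C} (c d : corel L F X Y) (f : hom (cop L X Y) N) :
  corel_eq L F c d -> is_epart d f -> is_epart c f.
Proof.
  intros [h [Hi Hh]] [m [Hm Hf]]. exists (comp m h).
  split; [apply M_comp; [apply M_iso|]; assumption|].
  rewrite comp_assoc_r; unfold cmap; rewrite Hh; assumption.
Qed.

Lemma is_epart_unique {X Y N : ob C} (c d : corel L F X Y) (f : hom (cop L X Y) N) :
  is_epart c f -> is_epart d f -> corel_eq L F c d.
Proof.
  destruct c as [Nc [fc Ec]], d as [Nd [fd Ed]].
  intros [m1 [Hm1 H1]] [m2 [Hm2 H2]]. unfold cmap, corel_eq in *; simpl in *.
  destruct (diag C F _ _ _ _ fc m2 fd m1 Ec Hm2) as [h [Hh1 [Hh2 _]]].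
  { rewrite H1, H2; reflexivity. }
  destruct (diag C F _ _ _ _ fd m1 fc m2 Ed Hm1) as [k [Hk1 [Hk2 _]]].
  { rewrite H1, H2; reflexivity. }
  destruct (diag C F _ _ _ _ fc m1 fc m1 Ec Hm1) as [d1 [_ [_ U1]]]; [reflexivity|].
  destruct (diag C F _ _ _ _ fd m2 fd m2 Ed Hm2) as [d2 [_ [_ U2]]]; [reflexivity|].
  exists h. split; [|assumption]. exists k. split.
  - rewrite (U1 (comp k h)), (U1 (idc _)); auto.
    + apply comp_id_l.
    + apply comp_id_r.
    + rewrite comp_assoc_r, Hh1; assumption.
    + rewrite <- comp_assoc_r, Hk2; assumption.
  - rewrite (U2 (comp h k)), (U2 (idc _)); auto.
    + apply comp_id_l.
    + apply comp_id_r.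
    + rewrite comp_assoc_r, Hk1; assumption.
    + rewrite <- comp_assoc_r, Hh2; assumption.
Qed.

End EParts.

Section Costable.
Variables (C : Cat) (L : FinColim C) (F : FactSys C).
Hypothesis HF : costable L F.

(* By pasting, [Q] is the pushout of [m1] along [q1] with [u] the pushed-out copy of [m1],
   so costability puts [u] in M. *)
Lemma pushout_comparison_M_l {Y N1 N2 N1' Q0 Q : ob C} (a : hom Y N1) (b : hom Y N2)
  (m1 : hom N1 N1') (q1 : hom N1 Q0) (q2 : hom N2 Q0) (p1 : hom N1' Q) (p2 : hom N2 Q)
  (u : hom Q0 Q) :
  is_pushout C a b q1 q2 -> is_pushout C (comp m1 a) b p1 p2 -> M F m1 ->
  comp u q1 = comp p1 m1 -> comp u q2 = p2 -> M F u.
Proof.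
  intros HQ0 HQ Hm Hu1 Hu2.
  pose (r1 := po1 L m1 q1). pose (r2 := po2 L m1 q1).
  assert (Hr2 : M F r2) by (apply (proj1 (HF _ _ _ m1 q1)); assumption).
  assert (Hrc : comp r1 m1 = comp r2 q1) by apply po_comm.
  assert (Hcomm : comp r1 (comp m1 a) = comp (comp r2 q2) b).
  { rewrite <- comp_assoc_r, Hrc, !comp_assoc_r, (proj1 HQ0); reflexivity. }
  destruct (proj2 HQ _ r1 (comp r2 q2) Hcomm) as [al [Ha1 [Ha2 _]]].
  destruct (po_univ C L _ _ _ m1 q1 _ p1 u (eq_sym Hu1)) as [be [Hb1 [Hb2 _]]].
  fold r1 r2 in Hb1, Hb2.
  assert (HQid : comp be al = idc Q).
  { apply (is_pushout_ext C _ _ _ _ _ _ HQ).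
    - rewrite comp_assoc_r, Ha1, Hb1, comp_id_l; reflexivity.
    - rewrite comp_assoc_r, Ha2, <- comp_assoc_r, Hb2, Hu2, comp_id_l; reflexivity. }
  assert (Hau : comp al u = r2).
  { apply (is_pushout_ext C _ _ _ _ _ _ HQ0).
    - rewrite comp_assoc_r, Hu1, <- comp_assoc_r, Ha1, Hrc; reflexivity.
    - rewrite comp_assoc_r, Hu2, Ha2; reflexivity. }
  assert (HRid : comp al be = idc _).
  { apply (is_pushout_ext C _ _ _ _ _ _ (po_is_pushout C L m1 q1)); fold r1 r2.
    - rewrite comp_assoc_r, Hb1, Ha1, comp_id_l; reflexivity.
    - rewrite comp_assoc_r, Hb2, Hau, comp_id_l; reflexivity. }
  rewrite <- Hb2. apply M_comp; [assumption|]. apply M_iso. exists al; split; assumption.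
Qed.

Lemma pushout_comparison_M {Y N1 N2 N1' N2' Q0 Q : ob C} (a : hom Y N1) (b : hom Y N2)
  (m1 : hom N1 N1') (m2 : hom N2 N2') (q1 : hom N1 Q0) (q2 : hom N2 Q0)
  (p1 : hom N1' Q) (p2 : hom N2' Q) (u : hom Q0 Q) :
  is_pushout C a b q1 q2 -> is_pushout C (comp m1 a) (comp m2 b) p1 p2 -> M F m1 -> M F m2 ->
  comp u q1 = comp p1 m1 -> comp u q2 = comp p2 m2 -> M F u.
Proof.
  intros HQ0 HQ Hm1 Hm2 Hu1 Hu2.
  pose (r1 := po1 L (comp m1 a) b). pose (r2 := po2 L (comp m1 a) b).
  assert (HR : is_pushout C (comp m1 a) b r1 r2) by apply po_is_pushout.
  destruct (proj2 HQ0 _ (comp r1 m1) r2) as [u1 [H11 [H12 _]]].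
  { rewrite comp_assoc_r; apply (proj1 HR). }
  destruct (proj2 HR _ p1 (comp p2 m2)) as [u2 [H21 [H22 _]]].
  { rewrite (proj1 HQ), comp_assoc_r; reflexivity. }
  assert (M1 : M F u1) by (apply (pushout_comparison_M_l a b m1 q1 q2 r1 r2); assumption).
  assert (M2 : M F u2).
  { apply (pushout_comparison_M_l b (comp m1 a) m2 r2 r1 p2 p1);
      auto; apply is_pushout_sym; assumption. }
  assert (Hu : u = comp u2 u1).
  { apply (is_pushout_ext C _ _ _ _ _ _ HQ0).
    - rewrite Hu1, comp_assoc_r, H11, <- comp_assoc_r, H21; reflexivity.
    - rewrite Hu2, comp_assoc_r, H12, H22; reflexivity. }
  rewrite Hu; apply M_comp; assumption.
Qed.

Lemma hsum_M {N1 N2 N1' N2' : ob C} (m1 : hom N1 N1') (m2 : hom N2 N2') :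
  M F m1 -> M F m2 -> M F (hsum C L m1 m2).
Proof.
  intros H1 H2.
  apply (pushout_comparison_M (bang L N1) (bang L N2) m1 m2 (inl L _ _) (inr L _ _)
           (inl L N1' N2') (inr L N1' N2')); try assumption.
  - apply coproduct_is_pushout.
  - rewrite (init_hom_eq C L (comp m1 _) (bang L _)), (init_hom_eq C L (comp m2 _) (bang L _)).
    apply coproduct_is_pushout.
  - apply copair_inl.
  - apply copair_inr.
Qed.

End Costable.

Section EPartOps.
Variables (C : Cat) (L : FinColim C) (F : FactSys C).
Hypothesis HF : costable L F.

Lemma is_epart_comp {X Y Z N1 N2 Q : ob C} (c : corel L F X Y) (d : corel L F Y Z)
  (f : hom (cop L X Y) N1) (g : hom (cop L Y Z) N2) (p1 : hom N1 Q) (p2 : hom N2 Q) :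
  is_epart C L F c f -> is_epart C L F d g -> is_pushout C (rleg L f) (lleg L g) p1 p2 ->
  is_epart C L F (corel_comp C L F X Y Z d c)
    (copair L (comp p1 (lleg L f)) (comp p2 (rleg L g))).
Proof.
  intros [m1 [Hm1 Hf]] [m2 [Hm2 Hg]] HQ.
  unfold corel_comp; cbv zeta.
  set (fc := cmap L F c) in *. set (gd := cmap L F d) in *.
  set (q1 := po1 L (rleg L fc) (lleg L gd)). set (q2 := po2 L (rleg L fc) (lleg L gd)).
  assert (HQ0 : is_pushout C (rleg L fc) (lleg L gd) q1 q2) by apply po_is_pushout.
  assert (HQ' : is_pushout C (comp m1 (rleg L fc)) (comp m2 (lleg L gd)) p1 p2).
  { unfold rleg, lleg in *. rewrite <- !comp_assoc_r, Hf, Hg. assumption. }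
  destruct (proj2 HQ0 _ (comp p1 m1) (comp p2 m2)) as [u [Hu1 [Hu2 _]]].
  { rewrite !comp_assoc_r. apply (proj1 HQ'). }
  assert (Mu : M F u) by (apply (pushout_comparison_M C L F HF (rleg L fc) (lleg L gd)
                                 m1 m2 q1 q2 p1 p2 u); assumption).
  apply (is_epart_eq C L F _ (comp u (copair L (comp q1 (lleg L fc)) (comp q2 (rleg L gd))))).
  - apply is_epart_M; [apply is_epart_epart | assumption].
  - apply copair_ext; rewrite comp_assoc_r, ?copair_inl, ?copair_inr, <- comp_assoc_r.
    + rewrite Hu1. unfold lleg. rewrite !comp_assoc_r, <- (comp_assoc_r C _ fc m1), Hf.
      reflexivity.
    + rewrite Hu2. unfold rleg. rewrite !comp_assoc_r, <- (comp_assoc_r C _ gd m2), Hg.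
      reflexivity.
Qed.

Lemma is_epart_comp_iso_l {X Y Z N1 N2 : ob C} (c : corel L F X Y) (d : corel L F Y Z)
  (f : hom (cop L X Y) N1) (g : hom (cop L Y Z) N2) (j' : hom N1 Y) :
  is_epart C L F c f -> is_epart C L F d g ->
  comp j' (rleg L f) = idc _ -> comp (rleg L f) j' = idc _ ->
  is_epart C L F (corel_comp C L F X Y Z d c)
    (copair L (comp (lleg L g) (comp j' (lleg L f))) (rleg L g)).
Proof.
  intros Hc Hd H1 H2.
  eapply is_epart_eq; [apply (is_epart_comp c d f g (comp (lleg L g) j') (idc _)); auto|].
  - apply is_pushout_sym, is_pushout_along_iso; assumption.
  - rewrite comp_assoc_r, comp_id_l; reflexivity.
Qed.

Lemma is_epart_comp_iso_r {X Y Z N1 N2 : ob C} (c : corel L F X Y) (d : corel L F Y Z)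
  (f : hom (cop L X Y) N1) (g : hom (cop L Y Z) N2) (j' : hom N2 Y) :
  is_epart C L F c f -> is_epart C L F d g ->
  comp j' (lleg L g) = idc _ -> comp (lleg L g) j' = idc _ ->
  is_epart C L F (corel_comp C L F X Y Z d c)
    (copair L (lleg L f) (comp (rleg L f) (comp j' (rleg L g)))).
Proof.
  intros Hc Hd H1 H2.
  eapply is_epart_eq; [apply (is_epart_comp c d f g (idc _) (comp (rleg L f) j')); auto|].
  - apply is_pushout_along_iso; assumption.
  - rewrite comp_id_l, comp_assoc_r; reflexivity.
Qed.

Lemma is_epart_comp_of {X Y Z : ob C} (c : corel L F X Y) (d : corel L F Y Z)
  (a : hom X Y) (b : hom Y Z) :
  is_epart C L F c (copair L a (idc Y)) -> is_epart C L F d (copair L b (idc Z)) ->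
  is_epart C L F (corel_comp C L F X Y Z d c) (copair L (comp b a) (idc Z)).
Proof.
  intros Hc Hd. eapply is_epart_eq; [apply (is_epart_comp_iso_l c d _ _ (idc Y) Hc Hd)|].
  - unfold rleg; rewrite copair_inr; apply comp_id_l.
  - unfold rleg; rewrite copair_inr; apply comp_id_l.
  - unfold lleg, rleg. rewrite !copair_inl, copair_inr, comp_id_l; reflexivity.
Qed.

Lemma corel_of_iso_inverse {X Y : ob C} (k : hom X Y) (k' : hom Y X) :
  comp k' k = idc X -> comp k k' = idc Y ->
  corel_eq L F (corel_comp C L F _ _ _ (corel_of L F k') (corel_of L F k)) (corel_id C L F X) /\
  corel_eq L F (corel_comp C L F _ _ _ (corel_of L F k) (corel_of L F k')) (corel_id C L F Y).
Proof.
  intros H1 H2. split; eapply is_epart_unique;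
    try (apply is_epart_comp_of; apply is_epart_of);
    [rewrite H1 | rewrite H2]; apply is_epart_of.
Qed.

Lemma is_epart_ten {X Y X' Y' N N' : ob C} (c : corel L F X Y) (d : corel L F X' Y')
  (f : hom (cop L X Y) N) (g : hom (cop L X' Y') N') :
  is_epart C L F c f -> is_epart C L F d g ->
  is_epart C L F (corel_ten C L F X Y X' Y' c d) (cospan_ten C L f g).
Proof.
  intros [m1 [Hm1 Hf]] [m2 [Hm2 Hg]].
  unfold corel_ten; cbv zeta.
  apply (is_epart_eq C L F _ (comp (hsum C L m1 m2) (cospan_ten C L (cmap L F c) (cmap L F d)))).
  - apply is_epart_M; [apply is_epart_epart | apply hsum_M; assumption].
  - subst f g. generalize (cmap L F c) (cmap L F d); intros fc gd.
    unfold cospan_ten, hsum, lleg, rleg.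
    apply copair_ext; rewrite comp_assoc_r, ?copair_inl, ?copair_inr; apply copair_ext;
      rewrite !comp_assoc_r, ?copair_inl, ?copair_inr, <- !comp_assoc_r,
        ?copair_inl, ?copair_inr, !comp_assoc_r; reflexivity.
Qed.

Lemma is_epart_ten_of {X Y X' Y' : ob C} (c : corel L F X Y) (d : corel L F X' Y')
  (a : hom X Y) (b : hom X' Y') :
  is_epart C L F c (copair L a (idc Y)) -> is_epart C L F d (copair L b (idc Y')) ->
  is_epart C L F (corel_ten C L F X Y X' Y' c d) (copair L (hsum C L a b) (idc _)).
Proof.
  intros H1 H2. eapply is_epart_eq; [apply is_epart_ten; eassumption|].
  unfold cospan_ten, hsum, lleg, rleg. rewrite !copair_inl, !copair_inr, !comp_id_r.
  f_equal. apply copair_ext; rewrite ?copair_inl, ?copair_inr, ?comp_id_l; reflexivity.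
Qed.

End EPartOps.

Section Image.
Variables (C C' : Cat) (L : FinColim C) (L' : FinColim C')
  (F : FactSys C) (F' : FactSys C') (A : Functor C C').
Hypotheses (HF : costable L F) (HF' : costable L' F')
  (HA : preserves_finite_colimits L A)
  (HAM : forall (X Y : ob C) (f : hom X Y), M F f -> M F' (fmap A f)).

Local Notation K := (kappa C C' L L' A).
Local Notation box := (corel_image C C' L L' F F' A _ _).
Local Notation kbar := (kappa_bar C C' L L' F' A).
Local Notation ubar := (unit_bar C C' L L' F' A).
Local Notation "g ⊙ f" := (corel_comp C' L' F' _ _ _ g f) (at level 40, left associativity).
Local Notation "f ⊗ g" := (corel_ten C' L' F' _ _ _ _ f g) (at level 35).
Local Notation "c ≡ d" := (corel_eq L' F' c d) (at level 70).
Local Notation id' X := (corel_id C' L' F' X).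

Lemma comp_fmap {X Y Z : ob C} (f : hom X Y) (g : hom Y Z) :
  comp (fmap A g) (fmap A f) = fmap A (comp g f).
Proof. symmetry; apply fmap_comp. Qed.

Lemma comp_fmap_assoc {X Y Z : ob C} {W} (f : hom X Y) (g : hom Y Z) (x : hom W (fob A X)) :
  comp (fmap A g) (comp (fmap A f) x) = comp (fmap A (comp g f)) x.
Proof. apply comp_eq_assoc, comp_fmap. Qed.

Ltac simpl_maps :=
  repeat progress (
    unfold kappa, hsum, lleg, rleg, cospan_ten, assoc_map, lunit_map, runit_map,
      braid_map, codiag in *;
    rewrite ?comp_assoc_r, ?comp_id_l, ?comp_id_r, ?copair_inl, ?copair_inr,
      ?copair_inl_assoc, ?copair_inr_assoc, ?comp_fmap, ?comp_fmap_assoc, ?fmap_id).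

Lemma fmap_is_pushout {X Y Z : ob C} (f : hom X Y) (g : hom X Z) :
  is_pushout C' (fmap A f) (fmap A g) (fmap A (po1 L f g)) (fmap A (po2 L f g)).
Proof.
  split; [rewrite !comp_fmap, po_comm; reflexivity|].
  intros V h k Hhk. apply (proj2 (proj2 HA)); assumption.
Qed.

Lemma kappa_invertible (X Y : ob C) :
  exists psi, comp psi (K X Y) = idc _ /\ comp (K X Y) psi = idc _.
Proof.
  destruct (proj1 (proj2 HA) X Y _ (inl L' _ _) (inr L' _ _)) as [u [H1 [H2 _]]].
  exists u. split.
  - apply copair_ext; simpl_maps; rewrite ?H1, ?H2; reflexivity.
  - destruct (proj1 (proj2 HA) X Y _ (fmap A (inl L X Y)) (fmap A (inr L X Y)))
      as [w [_ [_ U]]].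
    rewrite (U (comp (K X Y) u)), (U (idc _)); auto; simpl_maps; rewrite ?H1, ?H2;
      simpl_maps; reflexivity.
Qed.

Lemma bang_image_init_invertible :
  exists b, comp b (bang L' (fob A (init L))) = idc _ /\
            comp (bang L' (fob A (init L))) b = idc _.
Proof.
  destruct (proj1 HA (init L')) as [b _]. exists b. split.
  - apply init_hom_eq.
  - destruct (proj1 HA (fob A (init L))) as [w U].
    rewrite (U (comp _ b)), (U (idc _)); reflexivity.
Qed.

Lemma is_epart_image {X Y N} (c : corel L F X Y) (f : hom (cop L X Y) N) :
  is_epart C L F c f -> is_epart C' L' F' (box c) (comp (fmap A f) (K X Y)).
Proof.
  intros [m [Hm Hf]]. subst f. unfold corel_image.
  eapply is_epart_eq; [apply is_epart_M; [apply is_epart_epart | apply (HAM _ _ m Hm)]|].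
  apply copair_ext; simpl_maps; reflexivity.
Qed.

Lemma is_epart_image_of {X Y} (c : corel L F X Y) (a : hom X Y) :
  is_epart C L F c (copair L a (idc Y)) ->
  is_epart C' L' F' (box c) (copair L' (fmap A a) (idc _)).
Proof.
  intros H. eapply is_epart_eq; [apply (is_epart_image _ _ H)|].
  apply copair_ext; simpl_maps; reflexivity.
Qed.

Lemma image_resp {X Y} (f g : corel L F X Y) : corel_eq L F f g -> box f ≡ box g.
Proof.
  intros H. apply (is_epart_unique C' L' F' _ _ (comp (fmap A (cmap L F g)) (K X Y)));
    apply is_epart_image; [apply (is_epart_corel_eq C L F f g _ H)|]; apply is_epart_cmap.
Qed.

Lemma image_id X : box (corel_id C L F X) ≡ id' (fob A X).
Proof.
  apply (is_epart_unique C' L' F' _ _ (copair L' (idc _) (idc _))).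
  - eapply is_epart_eq; [apply is_epart_image_of, is_epart_of | rewrite fmap_id; reflexivity].
  - apply is_epart_of.
Qed.

Lemma image_comp X Y Z (f : corel L F X Y) (g : corel L F Y Z) :
  box (corel_comp C L F X Y Z g f) ≡ box g ⊙ box f.
Proof.
  set (fc := cmap L F f). set (gd := cmap L F g).
  set (q1 := po1 L (rleg L fc) (lleg L gd)). set (q2 := po2 L (rleg L fc) (lleg L gd)).
  apply (is_epart_unique C' L' F' _ _
    (comp (fmap A (copair L (comp q1 (lleg L fc)) (comp q2 (rleg L gd)))) (K X Z))).
  - apply is_epart_image, is_epart_comp; try apply is_epart_cmap; [assumption|].
    apply po_is_pushout.
  - assert (E1 : rleg L' (comp (fmap A fc) (K X Y)) = fmap A (rleg L fc)) by (simpl_maps; auto).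
    assert (E2 : lleg L' (comp (fmap A gd) (K Y Z)) = fmap A (lleg L gd)) by (simpl_maps; auto).
    eapply is_epart_eq.
    + apply (is_epart_comp C' L' F' HF' (box f) (box g)
                 (comp (fmap A fc) (K X Y)) (comp (fmap A gd) (K Y Z)) (fmap A q1) (fmap A q2));
        try (apply is_epart_image, is_epart_cmap).
      rewrite E1, E2. apply fmap_is_pushout.
    + apply copair_ext; simpl_maps; reflexivity.
Qed.

Lemma image_kappa_natural X Y X' Y' (f : corel L F X X') (g : corel L F Y Y') :
  box (corel_ten C L F X X' Y Y' f g) ⊙ kbar X Y ≡ kbar X' Y' ⊙ (box f ⊗ box g).
Proof.
  set (fc := cmap L F f). set (gd := cmap L F g).
  set (G := comp (fmap A (cospan_ten C L fc gd)) (K (cop L X Y) (cop L X' Y'))).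
  set (T := cospan_ten C' L' (comp (fmap A fc) (K X X')) (comp (fmap A gd) (K Y Y'))).
  destruct (kappa_invertible X' Y') as [psi [Hp1 Hp2]].
  assert (HG : is_epart C' L' F' (box (corel_ten C L F X X' Y Y' f g)) G).
  { apply is_epart_image, is_epart_ten; try apply is_epart_cmap; assumption. }
  assert (HT : is_epart C' L' F' (box f ⊗ box g) T).
  { apply is_epart_ten; try apply is_epart_image, is_epart_cmap; assumption. }
  apply (is_epart_unique C' L' F' _ _
    (copair L' (comp (lleg L' G) (comp (idc _) (lleg L' (copair L' (K X Y) (idc _)))))
               (rleg L' G))).
  - apply (is_epart_comp_iso_l C' L' F' HF'); try assumption; try apply is_epart_of;
      unfold rleg; rewrite copair_inr; apply comp_id_l.
  - eapply is_epart_eq.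
    + apply is_epart_iso.
      * apply (is_epart_comp_iso_r C' L' F' HF' _ _ T (copair L' (K X' Y') (idc _)) psi);
          try assumption; try apply is_epart_of;
          unfold lleg; rewrite copair_inl; eassumption.
      * destruct (kappa_invertible (projT1 f) (projT1 g)) as [p2 [H1 H2]].
        exists p2; split; [exact H1 | exact H2].
    + apply copair_ext.
      * unfold G, T. simpl_maps. apply copair_ext; simpl_maps; reflexivity.
      * rewrite copair_inr, comp_assoc_r, copair_inr. unfold rleg at 2.
        rewrite copair_inr, comp_id_r. symmetry; rewrite <- comp_assoc_r.
        apply (comp_cancel_iso_r C' _ (K X' Y') psi); [|assumption].
        unfold G, T. simpl_maps. apply copair_ext; simpl_maps; reflexivity.
Qed.

Lemma image_kappa_invertible X Y :
  exists psi, psi ⊙ kbar X Y ≡ id' _ /\ kbar X Y ⊙ psi ≡ id' _.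
Proof.
  destruct (kappa_invertible X Y) as [psi [H1 H2]].
  exists (corel_of L' F' psi). apply (corel_of_iso_inverse C' L' F' HF'); assumption.
Qed.

Lemma image_unit_invertible : exists psi, psi ⊙ ubar ≡ id' _ /\ ubar ⊙ psi ≡ id' _.
Proof.
  destruct bang_image_init_invertible as [psi [H1 H2]].
  exists (corel_of L' F' psi). apply (corel_of_iso_inverse C' L' F' HF'); assumption.
Qed.

Ltac epart_chain :=
  repeat first [ assumption | eapply is_epart_comp_of | eapply is_epart_ten_of
               | eapply is_epart_image_of | eapply is_epart_of ].
Ltac simpl_cospans :=
  simpl_maps; try reflexivity; try apply init_hom_eq; try (apply copair_ext; simpl_cospans).
(* Both sides are E-parts of cospans [X -a-> Y <-1- Y] whose maps [a] agree. *)
Ltac by_common_epart :=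
  eapply is_epart_unique;
  [epart_chain | eapply is_epart_eq; [epart_chain | f_equal; simpl_cospans]].

Lemma image_assoc X Y Z :
  box (corel_of L F (assoc_map C L X Y Z)) ⊙ (kbar (cop L X Y) Z ⊙ (kbar X Y ⊗ id' (fob A Z)))
  ≡ kbar X (cop L Y Z) ⊙ ((id' (fob A X) ⊗ kbar Y Z)
                           ⊙ corel_of L' F' (assoc_map C' L' (fob A X) (fob A Y) (fob A Z))).
Proof. by_common_epart. Qed.

Lemma image_lunit X :
  box (corel_of L F (lunit_map C L X)) ⊙ (kbar (init L) X ⊙ (ubar ⊗ id' (fob A X)))
  ≡ corel_of L' F' (lunit_map C' L' (fob A X)).
Proof. by_common_epart. Qed.

Lemma image_runit X :
  box (corel_of L F (runit_map C L X)) ⊙ (kbar X (init L) ⊙ (id' (fob A X) ⊗ ubar))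
  ≡ corel_of L' F' (runit_map C' L' (fob A X)).
Proof. by_common_epart. Qed.

Lemma image_braid X Y :
  box (corel_of L F (braid_map C L X Y)) ⊙ kbar X Y
  ≡ kbar Y X ⊙ corel_of L' F' (braid_map C' L' (fob A X) (fob A Y)).
Proof. by_common_epart. Qed.

Lemma image_mu X : box (corel_mu C L F X) ⊙ kbar X X ≡ corel_mu C' L' F' (fob A X).
Proof. unfold corel_mu. by_common_epart. Qed.

Lemma image_eta X : box (corel_eta C L F X) ⊙ ubar ≡ corel_eta C' L' F' (fob A X).
Proof. unfold corel_eta. by_common_epart. Qed.

Lemma image_delta X : box (corel_delta C L F X) ≡ kbar X X ⊙ corel_delta C' L' F' (fob A X).
Proof.
  destruct (kappa_invertible X X) as [psi [H1 H2]].
  unfold corel_delta. eapply is_epart_unique; [eapply is_epart_image, is_epart_epart|].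
  eapply is_epart_eq.
  - eapply (is_epart_comp_iso_r C' L' F' HF' _ _ _ _ psi).
    + apply is_epart_epart.
    + apply is_epart_of.
    + unfold lleg; rewrite copair_inl; eassumption.
    + unfold lleg; rewrite copair_inl; eassumption.
  - apply copair_ext.
    + simpl_maps. reflexivity.
    + rewrite copair_inr. unfold rleg. rewrite !copair_inr, comp_id_r. symmetry.
      apply (comp_cancel_iso_r C' _ (K X X) psi); [simpl_cospans | assumption].
Qed.

Lemma image_eps X : box (corel_eps C L F X) ≡ ubar ⊙ corel_eps C' L' F' (fob A X).
Proof.
  destruct bang_image_init_invertible as [psi [H1 H2]].
  unfold corel_eps. eapply is_epart_unique; [eapply is_epart_image, is_epart_epart|].
  eapply is_epart_eq.
  - eapply (is_epart_comp_iso_r C' L' F' HF' _ _ _ _ psi).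
    + apply is_epart_epart.
    + apply is_epart_of.
    + unfold lleg; rewrite copair_inl; eassumption.
    + unfold lleg; rewrite copair_inl; eassumption.
  - apply copair_ext.
    + simpl_maps. reflexivity.
    + rewrite copair_inr. unfold rleg. rewrite !copair_inr, comp_id_r. symmetry.
      apply (comp_cancel_iso_r C' _ (bang L' (fob A (init L))) psi);
        [apply init_hom_eq | assumption].
Qed.

End Image.

Theorem mainTheorem4
  (C C' : Cat) (L : FinColim C) (L' : FinColim C')
  (F : FactSys C) (F' : FactSys C')
  (HF : costable L F) (HF' : costable L' F')
  (A : Functor C C')
  (HA : preserves_finite_colimits L A)
  (HAM : forall (X Y : ob C) (f : hom X Y), M F f -> M F' (fmap A f)) :
  IsHypergraphFunctor (Corel L F) (Corel L' F')
    (fob A) (corel_image C C' L L' F F' A)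
    (kappa_bar C C' L L' F' A) (unit_bar C C' L L' F' A).
Proof.
  constructor; cbn.
  - apply image_resp; assumption.
  - apply image_id; assumption.
  - apply image_comp; assumption.
  - apply image_kappa_natural; assumption.
  - apply image_kappa_invertible; assumption.
  - apply image_unit_invertible; assumption.
  - apply image_assoc; assumption.
  - apply image_lunit; assumption.
  - apply image_runit; assumption.
  - apply image_braid; assumption.
  - apply image_mu; assumption.
  - apply image_delta; assumption.
  - apply image_eta; assumption.
  - apply image_eps; assumption.
Qed.
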